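(* For $0<|q|<1$, the sequences $$\alpha_n=\frac{(-1)^nq^{-2n}(1-q^{4n+2})}{1-q^2},\qquad\beta_n=\frac{(-1)^nq^{-2n}}{(-q;q)_n(q;q)_n}\qquad(n\ge0)$$ form a Bailey pair relative to $a=q$, i.e. $\beta_n=\sum_{r=0}^n\frac{\alpha_r}{(q;q)_{n-r}(q^2;q)_{n+r}}$ for all $n\ge0$.
   Context: $(a;q)_n=\prod_{k=0}^{n-1}(1-aq^k)$ with $(a;q)_0=1$. A Bailey pair relative to $a$ is a pair of sequences with $\beta_n=\sum_{r=0}^n\frac{\alpha_r}{(q;q)_{n-r}(aq;q)_{n+r}}$ for all $n\ge0$. *)

From HB Require Import structures.
From mathcomp Require Import all_boot all_order all_algebra.
Set Implicit Arguments. Unset Strict Implicit. Unset Printing Implicit Defensive.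
Import Order.TTheory GRing.Theory Num.Theory.
Local Open Scope ring_scope.

Definition qpoch {R : pzRingType} (a q : R) (n : nat) : R :=
  \prod_(k < n) (1 - a * q ^+ k).

Definition bailey_pair {F : fieldType} (a q : F) (alpha beta : nat -> F) : Prop :=
  forall n : nat,
    beta n = \sum_(r < n.+1)
               alpha r / (qpoch q q (n - r) * qpoch (a * q) q (n + r)).

(* Write [S_n] for the right-hand side of the Bailey relation.  A certificate
   [G = bailey_cert] found by creative telescoping makes the summand of
   [q^-2 S_n + (1 - q^(2n+2)) S_(n+1)] a difference [G(r+1) - G(r)], so the sum
   vanishes: [S] obeys a first order recurrence.  Since
   [(-q;q)_(n+1) (q;q)_(n+1) = (-q;q)_n (q;q)_n (1 - q^(2n+2))], [beta] obeys
   the same recurrence, and [S_0 = beta_0 = 1]. *)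
From HB Require Import structures.
From mathcomp Require Import all_boot all_order all_algebra.
From mathcomp Require Import ring zify.
Import Order.TTheory GRing.Theory Num.Theory.
Local Open Scope ring_scope.

Lemma qpoch0 (R : pzRingType) (a q : R) : qpoch a q 0 = 1.
Proof. by rewrite /qpoch big_ord0. Qed.

Lemma qpochS (R : pzRingType) (a q : R) n :
  qpoch a q n.+1 = qpoch a q n * (1 - a * q ^+ n).
Proof. by rewrite /qpoch big_ord_recr. Qed.

Lemma recurrence_uniq {F : fieldType} (a c u v : nat -> F) :
    (forall n, c n != 0) ->
    (forall n, a n * u n + c n * u n.+1 = 0) ->
    (forall n, a n * v n + c n * v n.+1 = 0) ->
  u 0%N = v 0%N -> forall n, u n = v n.
Proof.
move=> c_neq0 recu recv uv0; elim=> // n IHn.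
apply: (mulfI (c_neq0 n)); apply: (addrI (a n * u n)).
by rewrite recu IHn recv.
Qed.

Section NonRootOfUnity.
Variables (F : fieldType) (q : F).
Hypotheses (q_neq0 : q != 0) (qX_neq1 : forall k, (0 < k)%N -> q ^+ k != 1).

Lemma subr1X_neq0 k : (0 < k)%N -> 1 - q ^+ k != 0.
Proof. by move=> k_gt0; rewrite subr_eq0 eq_sym qX_neq1. Qed.

Lemma addr1X_neq0 k : (0 < k)%N -> 1 + q ^+ k != 0.
Proof.
move=> k_gt0; have := subr1X_neq0 k.*2; rewrite double_gt0 => /(_ k_gt0).
rewrite -addnn exprD -expr2 -{1}(expr1n F 2) subr_sqr mulf_eq0 negb_or.
by case/andP.
Qed.

Lemma qpoch_neq0 a n : (forall k, 1 - a * q ^+ k != 0) -> qpoch a q n != 0.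
Proof. by move=> factor_neq0; apply/prodf_neq0 => k _. Qed.

Lemma qpoch_q_neq0 n : qpoch q q n != 0.
Proof. by apply: qpoch_neq0 => k; rewrite -exprS subr1X_neq0. Qed.

Lemma qpoch_q2_neq0 n : qpoch (q * q) q n != 0.
Proof. by apply: qpoch_neq0 => k; rewrite -mulrA -!exprS subr1X_neq0. Qed.

Lemma qpoch_Nq_neq0 n : qpoch (- q) q n != 0.
Proof. by apply: qpoch_neq0 => k; rewrite mulNr opprK -exprS addr1X_neq0. Qed.

Definition bailey_alpha (n : nat) : F :=
  (-1) ^+ n * q ^- (2 * n) * (1 - q ^+ (4 * n + 2)) / (1 - q ^+ 2).

Definition bailey_beta (n : nat) : F :=
  (-1) ^+ n * q ^- (2 * n) / (qpoch (- q) q n * qpoch q q n).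

Definition bailey_term (m r : nat) : F :=
  bailey_alpha r / (qpoch q q (m - r) * qpoch (q * q) q (m + r)).

Definition bailey_sum (m : nat) : F := \sum_(r < m.+1) bailey_term m r.

Definition bailey_cert (m r : nat) : F :=
  (-1) ^+ r * q ^- (2 * r) * (q ^+ (2 * r) - 1)
  * (q ^+ (2 * r) + 1 - q * (1 - q) * q ^+ r * q ^+ m)
  / ((1 - q ^+ 2) * qpoch q q (m.+1 - r) * qpoch (q * q) q (m + r)).

Lemma bailey_term_telescope m r : (r < m.+1)%N ->
  q ^- 2 * bailey_term m r + (1 - q ^+ (2 * m + 2)) * bailey_term m.+1 r
  = bailey_cert m r.+1 - bailey_cert m r.
Proof.
rewrite ltnS => /subnKC <-; set d := (m - r)%N.
rewrite /bailey_term /bailey_cert /bailey_alpha.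
have -> : (r + d - r = d)%N by lia.
have -> : ((r + d).+1 - r = d.+1)%N by lia.
have -> : ((r + d).+1 - r.+1 = d)%N by lia.
have -> : ((r + d).+1 + r = (r + d + r).+1)%N by lia.
have -> : ((r + d) + r.+1 = (r + d + r).+1)%N by lia.
rewrite !qpochS.
have e1 : q ^+ (r + d + r) = (q ^+ r) ^+ 2 * q ^+ d.
  by rewrite -exprM -exprD; congr (_ ^+ _); lia.
have e2 : q ^+ (2 * (r + d) + 2) = q ^+ 2 * (q ^+ r) ^+ 2 * (q ^+ d) ^+ 2.
  by rewrite -!exprM -!exprD; congr (_ ^+ _); lia.
have e3 : q ^+ (2 * r) = (q ^+ r) ^+ 2 by rewrite -exprM mulnC.
have e4 : q ^+ (4 * r + 2) = (q ^+ r) ^+ 4 * q ^+ 2.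
  by rewrite -exprM -exprD; congr (_ ^+ _); lia.
have e5 : q ^+ (2 * r.+1) = (q ^+ r) ^+ 2 * q ^+ 2.
  by rewrite -exprM -exprD; congr (_ ^+ _); lia.
have e6 : q ^+ r.+1 = q ^+ r * q by rewrite exprSr.
have e7 : q ^+ (r + d) = q ^+ r * q ^+ d by rewrite exprD.
have e8 : (-1) ^+ r.+1 = - (-1) ^+ r :> F by rewrite exprS mulN1r.
have last_neq0 : 1 - q * q * ((q ^+ r) ^+ 2 * q ^+ d) != 0.
  by rewrite -e1 -mulrA -!exprS subr1X_neq0.
rewrite e1 e2 e3 e4 e5 e6 e7 e8.
have first_neq0 : 1 - q * q ^+ d != 0 by rewrite -exprS subr1X_neq0.
field.
by rewrite qpoch_q2_neq0 qpoch_q_neq0 first_neq0 last_neq0 subr1X_neq0 //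
  expf_neq0 q_neq0.
Qed.

Lemma bailey_cert0 m : bailey_cert m 0 = 0.
Proof. by rewrite /bailey_cert muln0 expr0 subrr !(mulr0, mul0r). Qed.

Lemma bailey_cert_last m :
  bailey_cert m m.+1 = - ((1 - q ^+ (2 * m + 2)) * bailey_term m.+1 m.+1).
Proof.
rewrite /bailey_cert /bailey_term /bailey_alpha subnn qpoch0.
have -> : (m.+1 + m.+1 = (m + m.+1).+1)%N by lia.
rewrite qpochS.
have e1 : q ^+ (m + m.+1) = q * (q ^+ m) ^+ 2.
  by rewrite -exprM -exprS; congr (_ ^+ _); lia.
have e2 : q ^+ (2 * m + 2) = q ^+ 2 * (q ^+ m) ^+ 2.
  by rewrite -exprM -exprD; congr (_ ^+ _); lia.
have e3 : q ^+ (2 * m.+1) = q ^+ 2 * (q ^+ m) ^+ 2.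
  by rewrite -exprM -exprD; congr (_ ^+ _); lia.
have e4 : q ^+ (4 * m.+1 + 2) = q ^+ 6 * (q ^+ m) ^+ 4.
  by rewrite -exprM -exprD; congr (_ ^+ _); lia.
have last_neq0 : 1 - q * q * (q * (q ^+ m) ^+ 2) != 0.
  by rewrite -e1 -mulrA -!exprS subr1X_neq0.
(* [field] rejects powers with an exponent of the form [n.+1]. *)
rewrite e1 e2 e3 e4 [q ^+ m.+1]exprS [(-1) ^+ m.+1]exprS.
field.
by rewrite qpoch_q2_neq0 last_neq0 subr1X_neq0 // expf_neq0 q_neq0.
Qed.

Lemma bailey_sum_rec m :
  q ^- 2 * bailey_sum m + (1 - q ^+ (2 * m + 2)) * bailey_sum m.+1 = 0.
Proof.
rewrite /bailey_sum [in X in _ + X]big_ord_recr /= mulrDr addrA.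
rewrite !mulr_sumr -big_split /=.
rewrite (eq_bigr _ (fun (i : 'I_m.+1) _ =>
  bailey_term_telescope _ _ (ltn_ord i))).
rewrite -(big_mkord xpredT (fun i => bailey_cert m i.+1 - bailey_cert m i)).
by rewrite telescope_sumr // bailey_cert0 subr0 bailey_cert_last addNr.
Qed.

Lemma bailey_beta_rec n :
  q ^- 2 * bailey_beta n + (1 - q ^+ (2 * n + 2)) * bailey_beta n.+1 = 0.
Proof.
rewrite /bailey_beta !qpochS.
have e2 : q ^+ (2 * n + 2) = q ^+ 2 * (q ^+ n) ^+ 2.
  by rewrite -exprM -exprD; congr (_ ^+ _); lia.
have e3 : q ^+ (2 * n.+1) = q ^+ 2 * (q ^+ n) ^+ 2.
  by rewrite -exprM -exprD; congr (_ ^+ _); lia.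
have e4 : q ^+ (2 * n) = (q ^+ n) ^+ 2 by rewrite -exprM mulnC.
have q_factor_neq0 : 1 - q * q ^+ n != 0 by rewrite -exprS subr1X_neq0.
have Nq_factor_neq0 : 1 - - q * q ^+ n != 0.
  by rewrite mulNr opprK -exprS addr1X_neq0.
rewrite e2 e3 e4 [(-1) ^+ n.+1]exprS.
field.
by rewrite q_factor_neq0 Nq_factor_neq0 qpoch_q_neq0 qpoch_Nq_neq0 expf_neq0
  q_neq0.
Qed.

Lemma bailey_sumE : bailey_sum =1 bailey_beta.
Proof.
apply: (recurrence_uniq (fun=> q ^- 2) (fun k => 1 - q ^+ (2 * k + 2))).
- by move=> k; rewrite subr1X_neq0 // addn2.
- exact: bailey_sum_rec.
- exact: bailey_beta_rec.
rewrite /bailey_sum big_ord1 /bailey_term /bailey_alpha /bailey_beta !qpoch0.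
by rewrite /= !muln0 add0n !expr0; field; rewrite oner_neq0 subr1X_neq0.
Qed.

Lemma bailey_pair_alpha_beta : bailey_pair q q bailey_alpha bailey_beta.
Proof. by move=> n; rewrite -bailey_sumE. Qed.

End NonRootOfUnity.

Theorem mainTheorem13 (C : numClosedFieldType) (q : C)
  (hq0 : 0 < `|q|) (hq1 : `|q| < 1) :
  bailey_pair q q
    (fun n => (-1) ^+ n * q ^- (2 * n) * (1 - q ^+ (4 * n + 2)) / (1 - q ^+ 2))
    (fun n => (-1) ^+ n * q ^- (2 * n) / (qpoch (- q) q n * qpoch q q n)).
Proof.
have q_neq0 : q != 0 by rewrite -normr_gt0.
have qX_neq1 k : (0 < k)%N -> q ^+ k != 1.
  move=> k_gt0; apply/eqP => qk1.
  have : `|q| ^+ k < 1 by rewrite exprn_ilt1 ?ltW // -lt0n.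
  by rewrite -normrX qk1 normr1 ltxx.
exact: (@bailey_pair_alpha_beta _ q q_neq0 qX_neq1).
Qed.
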